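(* Let $F$ be an infinite field of characteristic $p>2$, let $k$ be a positive integer and $n\in\mathbb{N}$. Then the polynomial $t_{2n}=[z_1,z_2][z_3,z_4]\cdots[z_{2n-1},z_{2n}]$, where all $z_j$ are variables of degree $0$, is not a $\mathbb{Z}$-graded identity of $E^{k^\ast}$.
   Context: $L$ is a vector space over $F$ with basis $e_1,e_2,\dots$, $E$ its unital Grassmann algebra (basis $1$ and $e_{i_1}\cdots e_{i_k}$, $i_1<\cdots<i_k$, with $e_ie_j=-e_je_i$). $E^{k^\ast}$ is $E$ with the $\mathbb{Z}$-grading induced by $\|e_i\|=1$ for $i\le k$, $\|e_i\|=0$ for $i>k$ (basis monomials get the sum of degrees of their factors; $1$ has degree $0$). A graded polynomial is a graded identity of $A$ if it vanishes whenever each variable is replaced by an element of the homogeneous component of $A$ of that variable's degree. $[a,b]=ab-ba$. *)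

From HB Require Import structures.
From mathcomp Require Import all_boot all_order all_algebra.
From mathcomp Require Import finmap.
Set Implicit Arguments. Unset Strict Implicit. Unset Printing Implicit Defensive.
Import Order.TTheory GRing.Theory Num.Theory.
Local Open Scope fset_scope.
Local Open Scope ring_scope.

(* Generators of L are indexed by nat, 0-based: index i stands for the
   paper's e_(i+1).  A basis monomial e_(i1)...e_(im) (i1<...<im) is the
   finite set {i1,...,im}; the empty set is the unit 1. *)
Definition mono := {fset nat}.

Definition gelt (F : fieldType) := mono -> F.

Definition gelt_in_E (F : fieldType) (a : gelt F) : Prop :=
  exists X : {fset mono}, forall S : mono, S \notin X -> a S = 0.

(* number of pairs (s,t), s in S, t in T with s > t: the sign of
   e_S e_T = (-1)^(inv S T) e_(S u T) for disjoint S, T *)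
Definition inv_count (S T : mono) : nat :=
  (\sum_(s <- S) \sum_(t <- T) (t < s))%N.

Definition gone (F : fieldType) : gelt F := fun U => if U == fset0 then 1 else 0.

Definition gmul (F : fieldType) (a b : gelt F) : gelt F := fun U =>
  \sum_(S <- fpowerset U) (-1) ^+ (inv_count S (U `\` S)) * a S * b (U `\` S).

Definition gcomm (F : fieldType) (a b : gelt F) : gelt F :=
  fun U => gmul a b U - gmul b a U.

(* Z-grading of E^{k*}: ||e_i|| = 1 for the first k generators, 0 otherwise *)
Definition mdeg (k : nat) (S : mono) : nat := (\sum_(i <- S) (i < k))%N.

Definition in_component (F : fieldType) (k : nat) (d : int) (a : gelt F) : Prop :=
  gelt_in_E a /\ forall S : mono, a S != 0 -> (mdeg k S)%:Z = d.

(* t_{2n}(z_1,...,z_{2n}) = [z_1,z_2][z_3,z_4]...[z_{2n-1},z_{2n}],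
   with z_(j+1) represented by z j *)
Definition t2n (F : fieldType) (n : nat) (z : nat -> gelt F) : gelt F :=
  \big[@gmul F/@gone F]_(i < n) gcomm (z (2 * i)%N) (z (2 * i).+1).

Definition t2n_graded_identity (F : fieldType) (k n : nat) : Prop :=
  forall z : nat -> gelt F,
    (forall j, (j < 2 * n)%N -> in_component k 0 (z j)) ->
    forall U : mono, t2n n z U = 0.

(* Substitute the distinct generators e_(k+1), ..., e_(k+2n), which all have
   degree 0 in E^{k*}.  Distinct generators anticommute, so each commutator
   [e_a, e_b] equals 2 e_a e_b and t_(2n) evaluates to
   2^n e_(k+1) e_(k+2) ... e_(k+2n), which is nonzero because char F <> 2. *)
From HB Require Import structures.
From mathcomp Require Import all_boot all_order all_algebra.
From mathcomp Require Import finmap.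
From mathcomp Require Import zify.
From Stdlib Require Import FunctionalExtensionality.
Import GRing.Theory.
Local Open Scope fset_scope.
Local Open Scope ring_scope.

Section Monomials.

Context {F : fieldType}.

Definition gmon (S : mono) (c : F) : gelt F := fun U => if U == S then c else 0.

Lemma gmon_in_component k S c : in_component k (mdeg k S) (gmon S c).
Proof.
split; first by exists [fset S] => U; rewrite inE /gmon => /negbTE ->.
by move=> U; rewrite /gmon; case: (U =P S) => [-> | _]; rewrite ?eqxx.
Qed.

Lemma gmul_gmon S T a b : [disjoint S & T] ->
  gmul (gmon S a) (gmon T b) = gmon (S `|` T) ((-1) ^+ inv_count S T * a * b).
Proof.
move=> /fdisjointP dST; apply: functional_extensionality => U; rewrite /gmul /gmon.
case: eqP => [-> | neU].
- have ST_S : (S `|` T) `\` S = T.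
    apply/fsetP => x; rewrite !inE; have := dST x.
    by case: (x \in S); case: (x \in T) => // /(_ isT).
  rewrite (bigD1_seq S) ?fset_uniq ?fpowersetE ?fsubsetUl //= ST_S !eqxx.
  by rewrite big1 ?addr0 // => X /negbTE ->; rewrite mulr0 mul0r.
- rewrite big_seq big1 // => X; rewrite fpowersetE => XU.
  case: eqP => [XS | _]; last by rewrite mulr0 mul0r.
  case: eqP => [UXT | _]; last by rewrite mulr0.
  case: neU; apply/fsetP => x; rewrite -UXT -XS !inE.
  by case: (boolP (x \in X)) => //= /(fsubsetP XU).
Qed.

End Monomials.

Lemma inv_count_eq0 (S T : mono) :
  (forall s t, s \in S -> t \in T -> (s < t)%N) -> inv_count S T = 0%N.
Proof.
move=> ST; rewrite /inv_count big_seq big1 // => s sS.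
by rewrite big_seq big1 // => t tT; rewrite ltnNge ltnW ?ST.
Qed.

Lemma inv_count_fset1 (a b : nat) : inv_count [fset a] [fset b] = (b < a)%N.
Proof. by rewrite /inv_count !big_seq_fset1. Qed.

Lemma mdeg_fset1 (k j : nat) : mdeg k [fset j] = (j < k)%N.
Proof. by rewrite /mdeg big_seq_fset1. Qed.

Lemma gcomm_gmon1 (F : fieldType) (a b : nat) : (a < b)%N ->
  gcomm (gmon [fset a] (1 : F)) (gmon [fset b] 1) = gmon [fset a; b] 2.
Proof.
move=> ab; have dab : [disjoint [fset a] & [fset b]].
  by rewrite fdisjoint1X inE ltn_eqF.
rewrite /gcomm gmul_gmon // gmul_gmon; last by rewrite fdisjoint_sym.
rewrite !inv_count_fset1 ab ltnNge (ltnW ab) /=.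
have -> : [fset b; a] = [fset a; b] by apply/fsetP => x; rewrite !inE orbC.
apply: functional_extensionality => U; rewrite /gmon; case: eqP => _.
  by rewrite expr0 expr1 !mulr1 opprK.
by rewrite subr0.
Qed.

Definition fiota (a l : nat) : mono := [fset x in iota a l].

Lemma in_fiota (a l x : nat) : (x \in fiota a l) = (a <= x < a + l)%N.
Proof. by rewrite /fiota inE mem_iota. Qed.

Lemma fiota0 (a : nat) : fiota a 0 = fset0.
Proof. by apply/fsetP => x; rewrite in_fiota inE; lia. Qed.

Lemma fiotaS2 (a l : nat) : fiota a l.+2 = [fset a; a.+1] `|` fiota a.+2 l.
Proof. by apply/fsetP => x; rewrite in_fsetU !in_fiota !inE; lia. Qed.

(* The first commutator sits to the left of all later generators, so peeling
   it off introduces no sign. *)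
Lemma big_gcomm_gmon1 (F : fieldType) (a n : nat) :
  \big[@gmul F/@gone F]_(i < n)
     gcomm (gmon [fset a + 2 * i]%N 1) (gmon [fset (a + 2 * i).+1]%N 1)
  = gmon (fiota a (2 * n)) (2 ^+ n).
Proof.
elim: n a => [|n IH] a; first by rewrite big_ord0 muln0 fiota0.
rewrite big_ord_recl addn0 gcomm_gmon1 //.
under eq_bigr => i _ do rewrite lift0 mulnS addnA addn2.
rewrite IH gmul_gmon; last first.
  by apply/fdisjointP => x; rewrite in_fiota !inE; case/orP => /eqP ->; lia.
rewrite inv_count_eq0; last first.
  by move=> s t; rewrite in_fiota !inE; case/orP => /eqP ->; lia.
by rewrite mulnS -fiotaS2 expr0 mul1r exprS.
Qed.

Lemma pchar_two_neq0 {F : fieldType} {p : nat} :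
  p \in [pchar F] -> p != 2%N -> (2 : F) != 0.
Proof.
move=> pFp p_neq2; apply: contra p_neq2 => two_eq0.
have : (2 \in [pchar F])%N by apply/andP.
by rewrite (pcharf_eq pFp) eq_sym.
Qed.

Theorem mainTheorem6 (F : fieldType) (p : nat)
  (F_infinite : forall s : seq F, exists x : F, x \notin s)
  (p_prime : prime p) (charFp : p \in [pchar F]) (p_gt2 : (2 < p)%N)
  (k n : nat) (k_pos : (0 < k)%N) :
  ~ t2n_graded_identity F k n.
Proof.
pose z j := gmon [fset k + j]%N (1 : F).
have z_deg0 j : in_component k 0 (z j).
  have := gmon_in_component k [fset k + j]%N (1 : F).
  by rewrite mdeg_fset1 ltnNge leq_addr.
have t2n_z : t2n n z = gmon (fiota k (2 * n)) (2 ^+ n).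
  by rewrite -big_gcomm_gmon1; apply: eq_bigr => i _; rewrite /z addnS.
move=> /(_ z (fun j _ => z_deg0 j) (fiota k (2 * n))) /eqP.
rewrite t2n_z /gmon eqxx; apply/negP/expf_neq0.
by apply: (pchar_two_neq0 charFp); rewrite gtn_eqF.
Qed.
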